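(* Let $X$ be a Hilbert space and let $B$ be a bounded self-adjoint operator on $X$ with $\rho(B)=\|B\|=1$ such that $-1$ is not an eigenvalue of $B$. Let $P$ be the orthogonal projection onto $\ker(I-B)$ and let $f\in X$ satisfy $Pf=0$. Then for every $x_0\in X$ the successive approximations $x_{n+1}=Bx_n+f$ satisfy $\|x_n-Bx_n-f\|\to 0$ as $n\to\infty$ (equivalently, the corrections $x_{n+1}-x_n$ tend to zero). No solvability of $x=Bx+f$ is assumed.
   Context: $I$ denotes the identity operator on $X$. *)

From Stdlib Require Import Reals.
Open Scope R_scope.

Record HilbertSpace := {
  hcar :> Type;
  hzero : hcar;
  hadd : hcar -> hcar -> hcar;
  hopp : hcar -> hcar;
  hscal : R -> hcar -> hcar;
  hinner : hcar -> hcar -> R;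
  haddA : forall x y z, hadd x (hadd y z) = hadd (hadd x y) z;
  haddC : forall x y, hadd x y = hadd y x;
  hadd0 : forall x, hadd x hzero = x;
  haddN : forall x, hadd x (hopp x) = hzero;
  hscalA : forall a b x, hscal a (hscal b x) = hscal (a * b) x;
  hscal1 : forall x, hscal 1 x = x;
  hscalDr : forall a x y, hscal a (hadd x y) = hadd (hscal a x) (hscal a y);
  hscalDl : forall a b x, hscal (a + b) x = hadd (hscal a x) (hscal b x);
  hinner_sym : forall x y, hinner x y = hinner y x;
  hinner_addl : forall x y z, hinner (hadd x y) z = hinner x z + hinner y z;
  hinner_scall : forall a x y, hinner (hscal a x) y = a * hinner x y;
  hinner_pos : forall x, 0 <= hinner x x;
  hinner_def : forall x, hinner x x = 0 -> x = hzero;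
  hcomplete : forall u : nat -> hcar,
    (forall eps, eps > 0 -> exists N : nat, forall m n : nat, (N <= m)%nat -> (N <= n)%nat ->
       sqrt (hinner (hadd (u m) (hopp (u n))) (hadd (u m) (hopp (u n)))) < eps) ->
    exists l : hcar, forall eps, eps > 0 -> exists N : nat, forall n : nat, (N <= n)%nat ->
       sqrt (hinner (hadd (u n) (hopp l)) (hadd (u n) (hopp l))) < eps
}.

Arguments hzero {h}.
Arguments hadd {h}.
Arguments hopp {h}.
Arguments hscal {h}.
Arguments hinner {h}.

Definition hsub {X : HilbertSpace} (x y : X) : X := hadd x (hopp y).
Definition hnorm {X : HilbertSpace} (x : X) : R := sqrt (hinner x x).

Definition is_linear {X : HilbertSpace} (T : X -> X) : Prop :=
  (forall x y, T (hadd x y) = hadd (T x) (T y)) /\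
  (forall a x, T (hscal a x) = hscal a (T x)).

Definition is_bounded_op {X : HilbertSpace} (T : X -> X) : Prop :=
  is_linear T /\ exists M : R, forall x, hnorm (T x) <= M * hnorm x.

Definition self_adjoint {X : HilbertSpace} (T : X -> X) : Prop :=
  forall x y, hinner (T x) y = hinner x (T y).

Definition op_norm_is {X : HilbertSpace} (T : X -> X) (c : R) : Prop :=
  is_lub (fun r => exists x : X, hnorm x <= 1 /\ r = hnorm (T x)) c.

Definition in_spectrum {X : HilbertSpace} (T : X -> X) (lam : R) : Prop :=
  ~ (exists S : X -> X, is_bounded_op S /\
       (forall x, S (hsub (T x) (hscal lam x)) = x) /\
       (forall y, hsub (T (S y)) (hscal lam (S y)) = y)).

Definition spectral_radius_is {X : HilbertSpace} (T : X -> X) (c : R) : Prop :=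
  is_lub (fun r => exists lam, in_spectrum T lam /\ r = Rabs lam) c.

Definition is_eigenvalue {X : HilbertSpace} (T : X -> X) (lam : R) : Prop :=
  exists v : X, v <> hzero /\ T v = hscal lam v.

Definition orth_proj_onto {X : HilbertSpace} (M : X -> Prop) (P : X -> X) : Prop :=
  forall x, M (P x) /\ (forall v, M v -> hinner (hsub x (P x)) v = 0).

(* The residuals e_n := x_n - B x_n - f satisfy e_(n+1) = B e_n, and
   e_0 is orthogonal to ker(I - B) because P f = 0.  For a self-adjoint contraction
   the numbers a_k := |B^k y|^2 = <y, B^(2k) y> decrease to some limit L, and
   |B^(2n) y - B^(2m) y|^2 = a_(2n) - 2 a_(n+m) + a_(2m) tends to 0, so the even
   iterates B^(2n) y converge to some w with B^2 w = w.  Since -1 is not an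
   eigenvalue, w - B w = 0, so w is a fixed point; orthogonality of y to the fixed
   points gives <B^(2n) y, w> = 0, whence a_(2n) <= |B^(2n) y - w|^2 -> 0. *)

From Stdlib Require Import Reals Lra Lia.
Open Scope R_scope.

Section InnerProduct.

Variable X : HilbertSpace.
Implicit Types u v w : X.

Lemma inner_zerol v : hinner hzero v = 0.
Proof. pose proof (hinner_addl X hzero hzero v) as H. rewrite hadd0 in H. lra. Qed.

Lemma inner_oppl u v : hinner (hopp u) v = - hinner u v.
Proof. pose proof (hinner_addl X u (hopp u) v) as H. rewrite haddN, inner_zerol in H. lra. Qed.

Lemma inner_addr u v w : hinner u (hadd v w) = hinner u v + hinner u w.
Proof. rewrite !(hinner_sym X u), hinner_addl. reflexivity. Qed.

Lemma inner_oppr u v : hinner u (hopp v) = - hinner u v.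
Proof. rewrite !(hinner_sym X u), inner_oppl. reflexivity. Qed.

Lemma inner_scalr a u v : hinner u (hscal a v) = a * hinner u v.
Proof. rewrite !(hinner_sym X u), hinner_scall. reflexivity. Qed.

Lemma inner_zeror v : hinner v hzero = 0.
Proof. rewrite hinner_sym; apply inner_zerol. Qed.

Lemma hsub_eq0 u v : hsub u v = hzero -> u = v.
Proof.
  unfold hsub; intro H.
  rewrite <- (hadd0 X u), <- (haddN X v), (haddC X v), haddA, H, haddC, hadd0.
  reflexivity.
Qed.

Lemma inner_inj u v : (forall t, hinner u t = hinner v t) -> u = v.
Proof.
  intro H. apply hsub_eq0, hinner_def. unfold hsub.
  rewrite hinner_addl, inner_oppl, H. ring.
Qed.

End InnerProduct.

#[local] Hint Rewrite hinner_addl inner_oppl hinner_scall inner_zerol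
  inner_addr inner_oppr inner_scalr inner_zeror : inner.

Ltac inner_simpl := unfold hsub; autorewrite with inner.
Ltac vector_eq := apply inner_inj; let t := fresh "t" in intro t; inner_simpl; ring.

Definition hnorm2 {X : HilbertSpace} (u : X) : R := hinner u u.

Section Norms.

Variable X : HilbertSpace.
Implicit Types u v : X.

Lemma hnorm2_ge0 u : 0 <= hnorm2 u.
Proof. apply hinner_pos. Qed.

Lemma hnorm2_sub u v : hnorm2 (hsub u v) = hnorm2 u - 2 * hinner u v + hnorm2 v.
Proof. unfold hnorm2. inner_simpl. rewrite (hinner_sym X v u). ring. Qed.

Lemma hnorm2_subC u v : hnorm2 (hsub u v) = hnorm2 (hsub v u).
Proof. rewrite !hnorm2_sub, (hinner_sym X v u). ring. Qed.

Lemma hnorm2_add_le u v : hnorm2 (hadd u v) <= 2 * hnorm2 u + 2 * hnorm2 v.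
Proof.
  pose proof (hnorm2_ge0 (hsub u v)) as H. unfold hnorm2, hsub in *.
  autorewrite with inner in *. rewrite (hinner_sym X v u) in *. lra.
Qed.

Lemma hnorm_scal a u : hnorm (hscal a u) = Rabs a * hnorm u.
Proof.
  unfold hnorm. rewrite hinner_scall, inner_scalr, <- Rmult_assoc, sqrt_mult_alt.
  - fold (Rsqr a). rewrite sqrt_Rsqr_abs. reflexivity.
  - apply Rle_0_sqr.
Qed.

Lemma op_norm_le (T : X -> X) c :
  (forall a u, T (hscal a u) = hscal a (T u)) -> op_norm_is T c ->
  forall u, hnorm (T u) <= c * hnorm u.
Proof.
  intros T_scal [T_ub _] u.
  destruct (Req_dec (hnorm u) 0) as [u0 | u_ne0].
  - apply sqrt_eq_0 in u0; [|apply hinner_pos]. apply hinner_def in u0. subst u.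
    assert (T0 : T hzero = hzero).
    { replace (@hzero X) with (hscal 0 (@hzero X)) by vector_eq.
      rewrite T_scal. vector_eq. }
    rewrite T0. unfold hnorm. rewrite inner_zerol, sqrt_0. lra.
  - pose proof (sqrt_pos (hinner u u)) as u_ge0. fold (hnorm u) in u_ge0.
    assert (inv_ge0 : 0 <= / hnorm u) by (apply Rlt_le, Rinv_0_lt_compat; lra).
    assert (unit : hnorm (hscal (/ hnorm u) u) <= 1).
    { rewrite hnorm_scal, Rabs_pos_eq, Rinv_l by assumption. lra. }
    assert (bound : hnorm (T (hscal (/ hnorm u) u)) <= c) by (apply T_ub; eauto).
    rewrite T_scal, hnorm_scal, Rabs_pos_eq in bound by exact inv_ge0.
    apply (Rmult_le_compat_r (hnorm u)) in bound; [|lra].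
    rewrite Rmult_comm, <- Rmult_assoc, Rinv_r, Rmult_1_l in bound; lra.
Qed.

Lemma hcomplete_norm2 (z : nat -> X) :
  (forall e, e > 0 -> exists N, forall m n, (N <= m)%nat -> (N <= n)%nat ->
     hnorm2 (hsub (z m) (z n)) < e) ->
  exists l, Un_cv (fun n => hnorm2 (hsub (z n) l)) 0.
Proof.
  intros z_cauchy. destruct (hcomplete X z) as [l z_cv].
  - intros eps eps_gt0. destruct (z_cauchy (eps * eps)) as [N HN]; [nra|].
    exists N. intros m n Hm Hn. rewrite <- (sqrt_square eps) by lra.
    apply sqrt_lt_1_alt. split; [apply hinner_pos | apply HN; auto].
  - exists l. intros e e_gt0. destruct (z_cv (sqrt e)) as [N HN]; [apply sqrt_lt_R0; lra|].
    exists N. intros n Hn. unfold R_dist. rewrite Rminus_0_r, Rabs_pos_eq by apply hnorm2_ge0.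
    apply sqrt_lt_0_alt, HN; auto.
Qed.

End Norms.

Lemma Un_cv_0_lt (a : nat -> R) :
  Un_cv a 0 -> forall e, e > 0 -> exists N, forall n, (N <= n)%nat -> a n < e.
Proof.
  intros a_cv e e_gt0. destruct (a_cv e e_gt0) as [N HN]. exists N. intros n Hn.
  specialize (HN n Hn). unfold R_dist in HN. rewrite Rminus_0_r in HN.
  pose proof (Rle_abs (a n)). lra.
Qed.

Section SelfAdjoint.

Variables (X : HilbertSpace) (B : X -> X).
Hypothesis B_sa : self_adjoint B.

Lemma self_adjoint_add u v : B (hadd u v) = hadd (B u) (B v).
Proof. apply inner_inj; intro t. rewrite B_sa, !hinner_addl, !B_sa. reflexivity. Qed.

Lemma self_adjoint_scal a u : B (hscal a u) = hscal a (B u).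
Proof. apply inner_inj; intro t. rewrite B_sa, !hinner_scall, B_sa. reflexivity. Qed.

Lemma self_adjoint_sub u v : B (hsub u v) = hsub (B u) (B v).
Proof.
  unfold hsub. rewrite self_adjoint_add. f_equal.
  apply inner_inj; intro t. rewrite B_sa, !inner_oppl, B_sa. reflexivity.
Qed.

Lemma iter_self_adjoint k u v : hinner (Nat.iter k B u) v = hinner u (Nat.iter k B v).
Proof.
  revert u v. induction k as [|k IHk]; intros u v; [reflexivity|].
  rewrite Nat.iter_succ, B_sa, IHk, <- Nat.iter_succ_r. reflexivity.
Qed.

Lemma inner_iter_even y n m :
  hinner (Nat.iter (2 * n) B y) (Nat.iter (2 * m) B y) = hnorm2 (Nat.iter (n + m) B y).
Proof.
  unfold hnorm2. rewrite !iter_self_adjoint, <- !Nat.iter_add.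
  f_equal. f_equal. lia.
Qed.

Lemma residual_iter (f : X) (x : nat -> X) :
  (forall n, x (S n) = hadd (B (x n)) f) ->
  forall n, hsub (hsub (x n) (B (x n))) f = Nat.iter n B (hsub (hsub (x 0%nat) (B (x 0%nat))) f).
Proof.
  intros xS n. induction n as [|n IHn]; [reflexivity|].
  rewrite Nat.iter_succ, <- IHn, xS, !self_adjoint_sub, self_adjoint_add. vector_eq.
Qed.

Lemma residual_orth_fixed (f u : X) :
  (forall v, hsub v (B v) = hzero -> hinner f v = 0) ->
  forall v, hsub v (B v) = hzero -> hinner (hsub (hsub u (B u)) f) v = 0.
Proof.
  intros f_orth v v_fixed. inner_simpl.
  rewrite B_sa, <- (hsub_eq0 X _ _ v_fixed), (f_orth v v_fixed). ring.
Qed.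

Hypothesis B_contr : forall u, hnorm2 (B u) <= hnorm2 u.

Lemma hnorm2_iter_decreasing y : Un_decreasing (fun k => hnorm2 (Nat.iter k B y)).
Proof. intro k. rewrite Nat.iter_succ. apply B_contr. Qed.

Lemma hnorm2_iter_cv y : exists L, Un_cv (fun k => hnorm2 (Nat.iter k B y)) L.
Proof.
  destruct (decreasing_cv _ (hnorm2_iter_decreasing y)) as [L L_cv]; [|eauto].
  exists 0. intros r [k ->]. unfold opp_seq.
  pose proof (hnorm2_ge0 X (Nat.iter k B y)). lra.
Qed.

Lemma iter_even_cauchy y :
  forall e, e > 0 -> exists N, forall m n, (N <= m)%nat -> (N <= n)%nat ->
    hnorm2 (hsub (Nat.iter (2 * m) B y) (Nat.iter (2 * n) B y)) < e.
Proof.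
  destruct (hnorm2_iter_cv y) as [L a_cv].
  pose proof (decreasing_ineq _ _ (hnorm2_iter_decreasing y) a_cv) as L_le.
  assert (a_near : forall e, e > 0 -> exists N, forall k, (N <= k)%nat ->
            hnorm2 (Nat.iter k B y) < L + e).
  { intros e e_gt0. destruct (a_cv e e_gt0) as [N HN]. exists N. intros k Hk.
    specialize (HN k Hk). unfold R_dist in HN.
    pose proof (Rle_abs (hnorm2 (Nat.iter k B y) - L)). lra. }
  intros e e_gt0. destruct (a_near (e / 2)) as [N HN]; [lra|].
  exists N. intros m n Hm Hn.
  assert (norm_even : forall k, hnorm2 (Nat.iter (2 * k) B y) = hnorm2 (Nat.iter (k + k) B y))
    by (intro k; apply inner_iter_even).
  rewrite hnorm2_sub, inner_iter_even, !norm_even.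
  assert (Hmm : (N <= m + m)%nat) by lia. assert (Hnn : (N <= n + n)%nat) by lia.
  pose proof (HN _ Hmm). pose proof (HN _ Hnn). pose proof (L_le (m + n)%nat). lra.
Qed.

Lemma iter_even_limit_square_fixed y w :
  Un_cv (fun n => hnorm2 (hsub (Nat.iter (2 * n) B y) w)) 0 -> B (B w) = w.
Proof.
  intro z_cv. apply hsub_eq0, hinner_def. fold (hnorm2 (hsub (B (B w)) w)).
  set (q := hnorm2 (hsub (B (B w)) w)).
  destruct (Req_dec q 0) as [q0 | q_ne0]; [exact q0 | exfalso].
  pose proof (hnorm2_ge0 X (hsub (B (B w)) w)) as q_ge0. fold q in q_ge0.
  destruct (Un_cv_0_lt _ z_cv (q / 4)) as [N HN]; [lra|].
  set (z := Nat.iter (2 * N) B y) in HN.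
  assert (z_succ : Nat.iter (2 * S N) B y = B (B z)).
  { replace (2 * S N)%nat with (S (S (2 * N))) by lia. rewrite !Nat.iter_succ. reflexivity. }
  assert (split_q : hsub (B (B w)) w = hadd (B (B (hsub w z))) (hsub (B (B z)) w)).
  { rewrite !self_adjoint_sub. vector_eq. }
  pose proof (hnorm2_add_le X (B (B (hsub w z))) (hsub (B (B z)) w)) as q_le.
  rewrite <- split_q in q_le. fold q in q_le.
  pose proof (B_contr (B (hsub w z))). pose proof (B_contr (hsub w z)).
  pose proof (HN N (le_n N)) as HzN. fold z in HzN. rewrite hnorm2_subC in HzN.
  pose proof (HN (S N) (le_S _ _ (le_n N))) as HzSN. rewrite z_succ in HzSN.
  lra.
Qed.

Hypothesis B_no_neg_eig : ~ is_eigenvalue B (-1).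

Lemma fixed_of_square_fixed w : B (B w) = w -> B w = w.
Proof.
  intro B2w. symmetry. apply hsub_eq0.
  destruct (Req_dec (hnorm2 (hsub w (B w))) 0) as [v0 | v_ne0]; [exact (hinner_def X _ v0)|].
  exfalso. apply B_no_neg_eig. exists (hsub w (B w)). split.
  { intro v0. apply v_ne0. rewrite v0. apply inner_zerol. }
  rewrite self_adjoint_sub, B2w. vector_eq.
Qed.

Theorem iter_cv_0_of_orth_fixed y :
  (forall v, hsub v (B v) = hzero -> hinner y v = 0) ->
  Un_cv (fun k => hnorm2 (Nat.iter k B y)) 0.
Proof.
  intro y_orth.
  destruct (hcomplete_norm2 X _ (iter_even_cauchy y)) as [w z_cv].
  assert (Bw : B w = w) by (apply fixed_of_square_fixed, (iter_even_limit_square_fixed y), z_cv).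
  assert (z_orth : forall n, hinner (Nat.iter (2 * n) B y) w = 0).
  { intro n. rewrite iter_self_adjoint.
    replace (Nat.iter (2 * n) B w) with w by (induction (2 * n)%nat; simpl; congruence).
    apply y_orth. rewrite Bw. vector_eq. }
  intros e e_gt0. destruct (Un_cv_0_lt _ z_cv e e_gt0) as [N HN].
  exists (2 * N)%nat. intros k Hk. unfold R_dist. rewrite Rminus_0_r, Rabs_pos_eq by apply hnorm2_ge0.
  pose proof (decreasing_prop _ _ _ (hnorm2_iter_decreasing y) Hk).
  specialize (HN N (le_n N)). cbv beta in HN.
  rewrite hnorm2_sub, z_orth in HN. pose proof (hnorm2_ge0 X w). lra.
Qed.

End SelfAdjoint.

Lemma orth_proj_kernel_orth (X : HilbertSpace) (M : X -> Prop) (P : X -> X) (f : X) :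
  orth_proj_onto M P -> P f = hzero -> forall v, M v -> hinner f v = 0.
Proof.
  intros hP Pf v Mv. destruct (hP f) as [_ f_orth].
  rewrite <- (f_orth v Mv), Pf. inner_simpl. ring.
Qed.

Lemma self_adjoint_contraction (X : HilbertSpace) (B : X -> X) :
  self_adjoint B -> op_norm_is B 1 -> forall u, hnorm2 (B u) <= hnorm2 u.
Proof.
  intros B_sa B_norm u. apply sqrt_le_0; try apply hnorm2_ge0.
  rewrite <- Rmult_1_l. apply (op_norm_le X B); auto using self_adjoint_scal.
Qed.

Theorem theorem1p2 (X : HilbertSpace) (B : X -> X) (P : X -> X) (f x0 : X)
  (x : nat -> X)
  (hB : is_bounded_op B) (hsa : self_adjoint B)
  (hrho : spectral_radius_is B 1) (hnormB : op_norm_is B 1)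
  (hneg : ~ is_eigenvalue B (-1))
  (hP : orth_proj_onto (fun v => hsub v (B v) = hzero) P)
  (hPf : P f = hzero)
  (hx0 : x 0%nat = x0)
  (hxS : forall n, x (S n) = hadd (B (x n)) f) :
  Un_cv (fun n => hnorm (hsub (hsub (x n) (B (x n))) f)) 0.
Proof.
  set (e0 := hsub (hsub (x 0%nat) (B (x 0%nat))) f).
  assert (e0_cv : Un_cv (fun n => hnorm2 (Nat.iter n B e0)) 0).
  { apply iter_cv_0_of_orth_fixed; auto using self_adjoint_contraction.
    apply residual_orth_fixed; auto. exact (orth_proj_kernel_orth X _ P f hP hPf). }
  rewrite <- sqrt_0.
  apply (continuity_seq sqrt (fun n => hnorm2 (hsub (hsub (x n) (B (x n))) f))).
  - apply continuity_pt_sqrt. lra.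
  - apply (Un_cv_ext _ _ (fun n => eq_sym (f_equal hnorm2 (residual_iter X B hsa f x hxS n)))).
    exact e0_cv.
Qed.
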